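(* Let $G=(V,E)$ be a finite simple connected graph with $n\ge2$ nodes, $0\le t<\kappa(G)$, and $R=\mathrm{radius}(G,t)$. Let $\varphi\in\Phi^{(t)}_{\mathrm{all}}$ be such that (1) at most one node crashes at round $1$ in $\varphi$, and (2) if some node $v$ crashes at round $1$ in $\varphi$, then $\varphi\in\Phi^\star_v$. Then for every successor $\varphi'$ of $\varphi$ (with respect to any node crashing last in $\varphi$, and any admissible choice of witness): (a) at most one node crashes at round $1$ in $\varphi'$; (b) if some node $v$ crashes at round $1$ in $\varphi'$, then $v$ crashes at round $1$ in $\varphi$; (c) there exists a node that is correct in both $\varphi$ and $\varphi'$ and satisfies $\mathrm{view}(w,R-1,\varphi)=\mathrm{view}(w,R-1,\varphi')$.
   Context: $\kappa(G)$ is the vertex connectivity of $G$; $N(v)$ the neighbourhood of $v$. Synchronous rounds; in each round each node sends a message to every neighbour. Failure patterns. A failure pattern is a set $\varphi=\{(v,F_v,f_v): v\in F\}$ with $F\subseteq V$, $|F|\le t$, integers $f_v\ge1$ and nonempty $F_v\subseteq N(v)$: $v$ acts normally in rounds $<f_v$, in round $f_v$ (the round at which $v$ crashes) its messages reach exactly $N(v)\setminus F_v$, and afterwards it sends nothing. Nodes in $F$ are faulty, the others correct. $\Phi^{(t)}_{\mathrm{all}}$ is the set of all failure patterns with at most $t$ faulty nodes. Causal paths, eccentricity, radius. A causal path w.r.t. $\varphi$ from $v$ to $v'$ is $u_1=v,\dots,u_q=v'$ with $u_{i+1}\in N(u_i)$, $u_i$ not crashed during rounds $1,\dots,i-1$,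 and $u_{i+1}\notin F_{u_i}$ if $u_i$ crashes at round $i$; length $q-1$. $\mathrm{ecc}(v,\varphi)$ is the maximum over correct $v'$ of the minimum length of a causal path from $v$ to $v'$ ($\infty$ if none exists for some correct $v'$). $\Phi^\star_v=\{\varphi\in\Phi^{(t)}_{\mathrm{all}}:\mathrm{ecc}(v,\varphi)<\infty\}$; $\mathrm{radius}(G,t)=\min_{v}\max_{\varphi\in\Phi^\star_v}\mathrm{ecc}(v,\varphi)$. Views. With inputs $x_u$ and flooding (each node sends $(u,x_u)$ in round 1 and forwards all known pairs thereafter), $\mathrm{view}(w,r,\varphi)$ is the set of pairs $(u,x_u)$ with $u=w$ or with a causal path w.r.t. $\varphi$ of length at most $r$ from $u$ to $w$. Successor. A node $u$ crashes last in $\varphi$ if $(u,F_u,f_u)\in\varphi$ and $f_u\ge f_v$ for all $(v,F_v,f_v)\in\varphi$. For such $u$, a successor of $\varphi$ w.r.t. $u$ is $\varphi'=(\varphi\setminus\{(u,F_u,f_u)\})\cup\{(u,F'_u,f'_u)\}$ where: (Case 1) if $F_u$ contains only faulty nodes of $\varphi$, then $f'_u=f_u+1$ and $F'_u=N(u)\setminus\{w\}$ for some correct neighbour $w$ of $u$; (Case 2) if $F_u$ contains exactly one correct node $w$ of $\varphi$, then $f'_u=f_u+1$ and $F'_u=N(u)$; (Case 3) if $F_u$ contains at least two correct nodes of $\varphi$, then $f'_u=f_u$ and $F'_u=F_u\setminus\{w\}$ for some correct $w\in F_u$. The node $w$ is called the witness. *)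

From mathcomp Require Import all_boot.
Set Implicit Arguments. Unset Strict Implicit. Unset Printing Implicit Defensive.

Section Defs.
Variable T : finType.
Variable e : rel T. (* adjacency of a simple graph: symmetric, irreflexive *)

Definition nbhd (v : T) : {set T} := [set y | e v y].

(* the subgraph induced by A is connected (empty / singleton count as connected) *)
Definition induced_connected (A : {set T}) : bool :=
  [forall x in A, forall y in A,
     connect (fun a b => [&& a \in A, b \in A & e a b]) x y].

Definition graph_connected : bool := induced_connected setT.

Definition vertex_cut (S : {set T}) : bool :=
  ~~ induced_connected (~: S) || (#|~: S| <= 1).

(* kappa(G): minimum size of such an S (S = setT always qualifies) *)
Definition kappa : nat := \big[minn/#|T|]_(S : {set T} | vertex_cut S) #|S|.

(* A failure pattern: phi v = Some (F_v, f_v) iff v is faulty *)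
Definition pattern := T -> option ({set T} * nat).

Definition faulty (phi : pattern) (v : T) : bool := phi v != None.

Definition crashes_at (phi : pattern) (v : T) (k : nat) : bool :=
  if phi v is Some (_, f) then f == k else false.

Definition valid_pattern (t : nat) (phi : pattern) : Prop :=
  #|[set v | faulty phi v]| <= t /\
  (forall v F f, phi v = Some (F, f) ->
     [/\ 0 < f, F != set0 & F \subset nbhd v]).

(* x has not crashed during rounds 1..i-1 *)
Definition alive (phi : pattern) (x : T) (i : nat) : bool :=
  if phi x is Some (_, f) then i <= f else true.

Definition sends (phi : pattern) (x : T) (i : nat) (y : T) : bool :=
  if phi x is Some (F, f) then (f == i) ==> (y \notin F) else true.

(* cpath phi i x s : the sequence x :: s = u_i, u_{i+1}, ... satisfies the
   causal path conditions, x being the i-th node of the path *)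
Fixpoint cpath (phi : pattern) (i : nat) (x : T) (s : seq T) {struct s} : bool :=
  alive phi x i &&
  (if s is y :: s' then [&& e x y, sends phi x i y & cpath phi i.+1 y s']
   else true).

Definition cpath_len (phi : pattern) (u w : T) (k : nat) : bool :=
  [exists s : k.-tuple T, cpath phi 1 u s && (last u s == w)].

Definition cpath_le (phi : pattern) (u w : T) (r : nat) : bool :=
  [exists k : 'I_r.+1, cpath_len phi u w k].

Definition ecc_le (phi : pattern) (v : T) (k : nat) : Prop :=
  forall v', ~~ faulty phi v' -> cpath_le phi v v' k.

Definition in_Phi_star (t : nat) (v : T) (phi : pattern) : Prop :=
  valid_pattern t phi /\ exists k, ecc_le phi v k.

Definition max_ecc_le (t : nat) (v : T) (k : nat) : Prop :=
  forall phi, in_Phi_star t v phi -> ecc_le phi v k.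

Definition is_radius (t R : nat) : Prop :=
  (exists v, max_ecc_le t v R) /\
  (forall v k, max_ecc_le t v k -> R <= k).

Definition fround (phi : pattern) (v : T) : nat :=
  if phi v is Some (_, f) then f else 0.

Definition crashes_last (phi : pattern) (u : T) : Prop :=
  faulty phi u /\ forall v, faulty phi v -> fround phi v <= fround phi u.

Definition successor (phi : pattern) (u w : T) (phi' : pattern) : Prop :=
  crashes_last phi u /\
  exists F f, phi u = Some (F, f) /\
    (forall v, v != u -> phi' v = phi v) /\
    [\/
        [/\ {in F, forall y, faulty phi y}, ~~ faulty phi w, e u w &
            phi' u = Some (nbhd u :\ w, f.+1)],
        [set y in F | ~~ faulty phi y] = [set w] /\
            phi' u = Some (nbhd u, f.+1)
      |
        [/\ 1 < #|[set y in F | ~~ faulty phi y]|, w \in F, ~~ faulty phi w &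
            phi' u = Some (F :\ w, f)]].

(* view(w, r, phi) for inputs x : T -> X, as a predicate on pairs *)
Definition view (X : eqType) (x : T -> X) (w : T) (r : nat) (phi : pattern)
  : pred (T * X) :=
  fun p => (p.2 == x p.1) && ((p.1 == w) || cpath_le phi p.1 w r).

End Defs.

From mathcomp Require Import all_boot zify.
From Stdlib Require Import Classical.
Set Implicit Arguments. Unset Strict Implicit. Unset Printing Implicit Defensive.

(* Passing from [phi] to [phi'] changes only [u], and only by letting one extra
   message, from [u] to the witness [w], arrive (at round [q], which is [f + 1] or
   [f + 2] for [f] the last crash round of [phi]); no crash moves to round 1,
   which gives (a) and (b).
   For (c), under [phi] every node has a causal path of length at most [f] to a
   correct node: a node crashing after round 1 informs all its neighbours, one of
   which is correct because [t < kappa], and a node crashing at round 1 reaches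
   the correct nodes since [phi] is in its [Phi*].  So if every correct node is
   within [r + 1 - q] correct hops of [w], then [w] hears from every node within
   [r] rounds under both patterns.  Otherwise some correct node is farther away;
   a causal path using the extra message enters [w] at round [q] and then only
   meets correct nodes, so it cannot reach that node within [r] rounds, and the
   node's view is the same under both patterns.  This holds for every horizon
   [r]: the value of the radius [R] plays no role. *)

Section CausalPaths.
Variables (T : finType) (e : rel T).
Implicit Types (phi : pattern T) (x y : T) (s : seq T).

Lemma cpath_cons phi i x y s :
  cpath e phi i x (y :: s) =
  alive phi x i && [&& e x y, sends phi x i y & cpath e phi i.+1 y s].
Proof. by []. Qed.

Lemma cpath_alive phi i x s : cpath e phi i x s -> alive phi x i.
Proof. by case: s => [|y s] /= /andP[]. Qed.

Lemma cpath_cat phi i x s1 s2 :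
  cpath e phi i x s1 -> cpath e phi (i + size s1) (last x s1) s2 ->
  cpath e phi i x (s1 ++ s2).
Proof.
elim: s1 i x => [|y s1 IH] i x /=; first by rewrite addn0.
case/andP=> -> /and3P[-> -> p1] p2 /=.
by apply: IH; rewrite // addSnnS.
Qed.

Lemma cpath_leP phi u w r :
  reflect (exists s, [/\ size s <= r, cpath e phi 1 u s & last u s = w])
          (cpath_le e phi u w r).
Proof.
apply: (iffP existsP) => [[k /existsP[s /andP[ps /eqP ls]]]|[s [sz ps ls]]].
  by exists s; rewrite size_tuple -ltnS.
exists (Ordinal (sz : size s < r.+1)); apply/existsP; exists (in_tuple s).
by rewrite /= ps ls eqxx.
Qed.

Lemma correct_alive phi c i : ~~ faulty phi c -> alive phi c i.
Proof. by rewrite /faulty /alive; case: (phi c). Qed.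

Lemma correct_sends phi c i y : ~~ faulty phi c -> sends phi c i y.
Proof. by rewrite /faulty /sends; case: (phi c). Qed.

Definition correct_edge phi : rel T :=
  fun a b => [&& e a b, ~~ faulty phi a & ~~ faulty phi b].

Lemma correct_edge_sym phi : symmetric e -> symmetric (correct_edge phi).
Proof. by move=> e_sym a b; rewrite /correct_edge e_sym (andbC (~~ faulty phi a)). Qed.

Lemma correct_walk_cpath phi i c s :
  ~~ faulty phi c -> path (correct_edge phi) c s -> cpath e phi i c s.
Proof.
elim: s c i => [|y s IH] c i c_ok /=; first by rewrite correct_alive.
case/andP=> /and3P[ecy _ y_ok] walk.
by rewrite correct_alive // ecy correct_sends //= IH.
Qed.

End CausalPaths.

Lemma path_rev_sym (T : Type) (r : rel T) x s :
  symmetric r -> path r x s ->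
  [/\ path r (last x s) (rev (belast x s)),
      last (last x s) (rev (belast x s)) = x &
      size (rev (belast x s)) = size s].
Proof.
move=> r_sym rs; split; last by rewrite size_rev size_belast.
  by rewrite rev_path; apply: sub_path rs => a b; rewrite r_sym.
by case: s {rs} => [|y s] //=; rewrite rev_cons last_rcons.
Qed.

Section Connectivity.
Variables (T : finType) (e : rel T).
Hypothesis e_irr : irreflexive e.

Lemma kappa_le S : vertex_cut e S -> kappa e <= #|S|.
Proof.
move=> cutS; rewrite /kappa.
elim: (index_enum _) (mem_index_enum S) => [|A r IH] //.
rewrite in_cons big_cons => /orP[/eqP <-|inS]; first by rewrite cutS geq_minl.
by case: ifP => _; rewrite ?geq_min IH ?orbT.
Qed.

(* In G - N(o) the node o is isolated. *)
Lemma vertex_cut_nbhd o : vertex_cut e (nbhd e o).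
Proof.
rewrite /vertex_cut; case: (boolP (induced_connected _ _)) => //= conn.
suff /subset_leq_card : ~: nbhd e o \subset [set o] by rewrite cards1.
have o_in : o \in ~: nbhd e o by rewrite !inE e_irr.
apply/subsetP=> c c_in; rewrite inE.
move: conn => /forall_inP/(_ o o_in)/forall_inP/(_ c c_in).
case/connectP=> [[|z p] /= pth -> //].
by case/andP: pth => /and3P[_ + eoz] _; rewrite !inE eoz.
Qed.

Lemma correct_neighbour (phi : pattern T) t o :
  #|[set v | faulty phi v]| <= t -> t < kappa e ->
  exists2 c, e o c & ~~ faulty phi c.
Proof.
move=> card_faulty t_lt_kappa.
have : ~~ (nbhd e o \subset [set v | faulty phi v]).
  apply: contraL t_lt_kappa => /subset_leq_card sub; rewrite -leqNgt.
  exact: leq_trans (kappa_le (vertex_cut_nbhd o)) (leq_trans sub card_faulty).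
by case/subsetPn=> c; rewrite !inE => eoc c_ok; exists c.
Qed.

End Connectivity.

Section Truncation.
Variables (T : finType) (e : rel T) (phi : pattern T) (f : nat).
Hypothesis crash_le_f : forall v F g, phi v = Some (F, g) -> g <= f.

Lemma faulty_alive_le x i : faulty phi x -> alive phi x i -> i <= f.
Proof.
rewrite /faulty /alive; case phi_x: (phi x) => [[F g]|] // _ i_le_g.
exact: leq_trans i_le_g (crash_le_f phi_x).
Qed.

(* Cut the path at its first correct node: the faulty nodes before it are still
   alive when visited, hence visited before round [f + 1]. *)
Lemma cpath_to_correct_short i x s :
  cpath e phi i x s -> ~~ faulty phi (last x s) ->
  exists s1, [/\ cpath e phi i x s1, ~~ faulty phi (last x s1) &
                 i + size s1 <= maxn i f.+1].
Proof.
elim: s i x => [|y s IH] i x ps last_ok.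
  by exists [::]; rewrite addn0 leq_maxl.
have x_alive := cpath_alive ps.
case: (boolP (faulty phi x)) => [x_bad|x_ok]; last first.
  by exists [::]; rewrite /= x_alive x_ok addn0 leq_maxl.
move: ps; rewrite cpath_cons => /andP[_ /and3P[exy sxy py]].
have [s1 [ps1 last1 sz1]] := IH _ _ py last_ok.
have i_le_f := faulty_alive_le x_bad x_alive.
exists (y :: s1); split => //; first by rewrite cpath_cons x_alive exy sxy.
by move: sz1 i_le_f => /=; lia.
Qed.

End Truncation.

Section Reach.
Variables (T : finType) (e : rel T).
Hypothesis e_irr : irreflexive e.
Variables (t : nat) (phi : pattern T) (f : nat).
Hypothesis phi_valid : valid_pattern e t phi.
Hypothesis t_lt_kappa : t < kappa e.
Hypothesis crash_le_f : forall v F g, phi v = Some (F, g) -> g <= f.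
Hypothesis crash1_star : forall v, crashes_at phi v 1 -> in_Phi_star e t v phi.

Lemma reach_correct o : exists s, cpath e phi 1 o s && ~~ faulty phi (last o s).
Proof.
have [card_faulty pattern_ok] := phi_valid.
have [c eoc c_ok] := correct_neighbour e_irr o card_faulty t_lt_kappa.
case phi_o: (phi o) => [[F g]|]; last first.
  by exists [::]; rewrite /= /faulty /alive phi_o.
have [g_pos _ _] := pattern_ok _ _ _ phi_o.
case: (ltnP 1 g) => [g_gt1|g_le1].
  exists [:: c]; rewrite /= (correct_alive 2 c_ok) c_ok eoc /alive /sends phi_o.
  by rewrite g_pos gtn_eqF.
have o_crash1 : crashes_at phi o 1 by rewrite /crashes_at phi_o eqn_leq g_le1.
have [_ [k ecc]] := crash1_star o_crash1.
by case/cpath_leP: (ecc c c_ok) => s [_ ps ls]; exists s; rewrite ps ls.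
Qed.

Lemma reach_correct_within o :
  exists s, [/\ cpath e phi 1 o s, ~~ faulty phi (last o s) & size s <= f].
Proof.
have [s /andP[ps last_ok]] := reach_correct o.
have [s1 [ps1 last1 sz1]] := cpath_to_correct_short crash_le_f ps last_ok.
by exists s1; split => //; move: sz1; lia.
Qed.

End Reach.

Section Comparison.
Variables (T : finType) (e : rel T).
Hypothesis e_sym : symmetric e.
Variables (phi phi' : pattern T) (w : T) (f q : nat).
Hypothesis alive_mono : forall x i, alive phi x i -> alive phi' x i.
Hypothesis sends_mono :
  forall x i y, alive phi x i -> sends phi x i y -> sends phi' x i y.
Hypothesis new_step_to_w : forall x i y,
  alive phi' x i -> e x y -> sends phi' x i y -> alive phi' y i.+1 ->
  ~~ (alive phi x i && sends phi x i y) -> y = w /\ i.+1 = q.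
Hypothesis alive_late_correct :
  forall y k, f.+1 < k -> alive phi' y k -> ~~ faulty phi y.
Hypothesis w_correct : ~~ faulty phi w.
Hypothesis f_lt_q : f < q.
Hypothesis reach_within : forall o,
  exists s, [/\ cpath e phi 1 o s, ~~ faulty phi (last o s) & size s <= f].

Lemma cpath_mono i x s : cpath e phi i x s -> cpath e phi' i x s.
Proof.
elim: s i x => [|y s IH] i x; first by rewrite /= !andbT; apply: alive_mono.
rewrite !cpath_cons => /andP[x_alive /and3P[-> sxy py]].
by rewrite alive_mono // sends_mono // IH.
Qed.

Lemma cpath_le_mono o v r : cpath_le e phi o v r -> cpath_le e phi' o v r.
Proof.
by case/cpath_leP=> s [sz ps ls]; apply/cpath_leP; exists s; rewrite cpath_mono.
Qed.

Lemma late_cpath_correct_walk j x s :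
  f < j -> ~~ faulty phi x -> cpath e phi' j x s -> path (correct_edge e phi) x s.
Proof.
elim: s j x => [|y s IH] j x // f_lt_j x_ok.
rewrite cpath_cons => /andP[_ /and3P[exy _ py]].
have y_ok : ~~ faulty phi y by apply: alive_late_correct (cpath_alive py).
by rewrite /= /correct_edge exy x_ok y_ok (IH j.+1) // ltnW.
Qed.

Lemma new_cpath_via_w i x s :
  cpath e phi' i x s -> ~~ faulty phi (last x s) -> ~~ cpath e phi i x s ->
  exists s2, [/\ path (correct_edge e phi) w s2, last w s2 = last x s &
                 i + size s = q + size s2].
Proof.
elim: s i x => [|y s IH] i x /=.
  by move=> _ x_ok; rewrite andbT correct_alive.
case/andP=> x_alive /and3P[exy sxy py] last_ok.
case: (boolP (cpath e phi i.+1 y s)) => [py_old|py_new] old_bad; last first.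
  by have [s2 [walk ls2 sz2]] := IH _ _ py last_ok py_new; exists s2; rewrite addnS.
have /new_step_to_w[] // : ~~ (alive phi x i && sends phi x i y).
  by apply: contra old_bad => /andP[-> ->]; rewrite exy.
- exact: cpath_alive py.
move=> y_w q_eq; rewrite y_w in py last_ok *.
exists s; rewrite addnS -q_eq; split => //.
by apply: (late_cpath_correct_walk (j := q)); rewrite // -q_eq.
Qed.

Definition near_w r c :=
  exists s, [/\ path (correct_edge e phi) w s, last w s = c & q + size s <= r.+1].

Lemma cpath_le_agree r : exists w0, ~~ faulty phi w0 /\
  forall o, cpath_le e phi o w0 r = cpath_le e phi' o w0 r.
Proof.
case: (classic (forall c, ~~ faulty phi c -> near_w r c)) => [all_near|].
  exists w; split => // o; apply/idP/idP => [|_]; first exact: cpath_le_mono.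
  have [s1 [ps1 last1 sz1]] := reach_within o.
  have [s2 [walk ls2 sz2]] := all_near _ last1.
  have [back lback szback] := path_rev_sym (correct_edge_sym phi e_sym) walk.
  apply/cpath_leP; exists (s1 ++ rev (belast w s2)); split.
  - by rewrite size_cat szback; move: f_lt_q; lia.
  - by apply: cpath_cat ps1 _; apply: correct_walk_cpath; rewrite // -ls2.
  - by rewrite last_cat -ls2.
case/not_all_ex_not=> c not_near; case: (imply_to_and _ _ not_near) => c_ok far.
exists c; split => // o; apply/idP/idP; first exact: cpath_le_mono.
case/cpath_leP=> s [sz ps' ls]; apply/cpath_leP; exists s; split => //.
case: (boolP (cpath e phi 1 o s)) => // old_bad; case: far.
have last_ok : ~~ faulty phi (last o s) by rewrite ls.
have [s2 [walk ls2 sz2]] := new_cpath_via_w ps' last_ok old_bad.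
by exists s2; rewrite ls2 ls; split => //; lia.
Qed.

End Comparison.

Section Successor.
Variables (T : finType) (e : rel T).
Hypothesis e_sym : symmetric e.
Hypothesis e_irr : irreflexive e.
Variables (phi phi' : pattern T) (u w : T) (F : {set T}) (f : nat).
Hypothesis phi_u : phi u = Some (F, f).
Hypothesis f_pos : 0 < f.
Hypothesis crash_le_f : forall v F0 g, phi v = Some (F0, g) -> g <= f.
Hypothesis agree : forall v, v != u -> phi' v = phi v.
Hypothesis update :
  [\/ [/\ {in F, forall y, faulty phi y}, ~~ faulty phi w, e u w &
          phi' u = Some (nbhd e u :\ w, f.+1)],
      [set y in F | ~~ faulty phi y] = [set w] /\ phi' u = Some (nbhd e u, f.+1)
    | [/\ 1 < #|[set y in F | ~~ faulty phi y]|, w \in F, ~~ faulty phi w &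
          phi' u = Some (F :\ w, f)]].

Lemma update_round : exists F' g, phi' u = Some (F', g) /\ f <= g <= f.+1.
Proof.
case: update => [[_ _ _]|[_]|[_ _ _]] ->; (do 2!eexists); split => //.
all: by rewrite ?leqnn ?leqnSn.
Qed.

Lemma update_witness_correct : ~~ faulty phi w.
Proof.
case: update => [[]|[corr_F _]|[]] //.
by have := set11 w; rewrite -corr_F inE => /andP[].
Qed.

Lemma faulty_dead_after v : v != u -> faulty phi v -> ~~ alive phi' v f.+1.
Proof.
move=> v_u; rewrite /faulty /alive agree //.
by case phi_v: (phi v) => [[F0 g]|] // _; rewrite -ltnNge ltnS (crash_le_f phi_v).
Qed.

Lemma update_sends_early i y : i <= f -> sends phi u i y -> sends phi' u i y.
Proof.
rewrite /sends phi_u => i_le_f.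
case: update => [[_ _ _]|[_]|[_ _ _]] ->; try by rewrite (@gtn_eqF i f.+1).
by case: (f == i) => //=; apply: contra => /setD1P[].
Qed.

Lemma missed_message_correct i y :
  e u y -> alive phi' y i.+1 -> i <= f -> ~~ (alive phi u i && sends phi u i y) ->
  [/\ i = f, y \in F & ~~ faulty phi y].
Proof.
move=> euy y_alive i_le_f; rewrite /alive /sends phi_u i_le_f /= negb_imply negbK.
case/andP=> /eqP f_i y_F; split => //.
apply: contraL y_alive => y_bad; rewrite -f_i faulty_dead_after //.
by apply: contraTneq euy => ->; rewrite e_irr.
Qed.

Lemma update_new_step : exists2 q, f < q & forall i y,
  alive phi' u i -> e u y -> sends phi' u i y -> alive phi' y i.+1 ->
  ~~ (alive phi u i && sends phi u i y) -> y = w /\ i.+1 = q.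
Proof.
case: update => [[F_bad _ _ phi'_u]|[corr_F phi'_u]|[_ _ _ phi'_u]].
- exists f.+2 => // i y; rewrite {1}/alive phi'_u => i_le euy sent y_alive old.
  case: (leqP i f) => [i_le_f|f_lt_i].
    have [_ /F_bad y_bad] := missed_message_correct euy y_alive i_le_f old.
    by rewrite y_bad.
  have i_f1 : i = f.+1 by apply/eqP; rewrite eqn_leq i_le.
  by move: sent; rewrite /sends phi'_u i_f1 eqxx !inE euy andbT negbK => /eqP.
- exists f.+1 => // i y; rewrite {1}/alive phi'_u => i_le euy sent y_alive old.
  case: (leqP i f) => [i_le_f|f_lt_i].
    have [-> y_F y_ok] := missed_message_correct euy y_alive i_le_f old.
    have : y \in [set y in F | ~~ faulty phi y] by rewrite inE y_F.
    by rewrite corr_F inE => /eqP.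
  have i_f1 : i = f.+1 by apply/eqP; rewrite eqn_leq i_le.
  by move: sent; rewrite /sends phi'_u i_f1 eqxx !inE euy.
- exists f.+1 => // i y; rewrite {1}/alive phi'_u => i_le_f euy sent y_alive old.
  have [i_f y_F _] := missed_message_correct euy y_alive i_le_f old.
  by move: sent; rewrite /sends phi'_u i_f eqxx !inE y_F andbT negbK => /eqP.
Qed.

Lemma successor_faulty v : faulty phi' v = faulty phi v.
Proof.
case: (eqVneq v u) => [->|v_u]; last by rewrite /faulty agree.
by have [F' [g [phi'_u _]]] := update_round; rewrite /faulty phi_u phi'_u.
Qed.

Lemma successor_alive x i : alive phi x i -> alive phi' x i.
Proof.
case: (eqVneq x u) => [->|x_u]; last by rewrite /alive agree.
have [F' [g [phi'_u /andP[f_le_g _]]]] := update_round.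
by rewrite /alive phi_u phi'_u => /leq_trans; apply.
Qed.

Lemma successor_sends x i y : alive phi x i -> sends phi x i y -> sends phi' x i y.
Proof.
case: (eqVneq x u) => [->|x_u]; last by rewrite /sends agree.
by rewrite /alive phi_u; apply: update_sends_early.
Qed.

Lemma successor_alive_late y k : f.+1 < k -> alive phi' y k -> ~~ faulty phi y.
Proof.
move=> f1_lt_k; case: (eqVneq y u) => [->|y_u].
  have [F' [g [phi'_u /andP[_ g_le]]]] := update_round.
  rewrite /alive phi'_u => k_le_g.
  by have := leq_trans f1_lt_k (leq_trans k_le_g g_le); rewrite ltnn.
rewrite /faulty /alive agree //; case phi_y: (phi y) => [[F0 g]|] // k_le_g.
by have := leq_trans f1_lt_k (leq_trans k_le_g (leqW (crash_le_f phi_y))); rewrite ltnn.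
Qed.

Lemma successor_new_step : exists2 q, f < q & forall x i y,
  alive phi' x i -> e x y -> sends phi' x i y -> alive phi' y i.+1 ->
  ~~ (alive phi x i && sends phi x i y) -> y = w /\ i.+1 = q.
Proof.
have [q f_lt_q new_u] := update_new_step; exists q => // x i y.
case: (eqVneq x u) => [->|x_u]; first exact: new_u.
by rewrite /alive /sends agree // => x_alive _ x_sends _; rewrite x_alive x_sends.
Qed.

Hypothesis reach_within : forall o,
  exists s, [/\ cpath e phi 1 o s, ~~ faulty phi (last o s) & size s <= f].

Lemma successor_cpath_le_agree r : exists w0,
  [/\ ~~ faulty phi w0, ~~ faulty phi' w0 &
      forall o, cpath_le e phi o w0 r = cpath_le e phi' o w0 r].
Proof.
have [q f_lt_q new_step] := successor_new_step.
have [w0 [w0_ok same_paths]] := cpath_le_agree e_sym successor_alive successor_sends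
  new_step successor_alive_late update_witness_correct f_lt_q reach_within r.
by exists w0; rewrite successor_faulty.
Qed.

Lemma successor_crash1 v : crashes_at phi' v 1 -> crashes_at phi v 1.
Proof.
case: (eqVneq v u) => [->|v_u]; last by rewrite /crashes_at agree.
have [F' [g [phi'_u /andP[f_le_g _]]]] := update_round.
by rewrite /crashes_at phi_u phi'_u => /eqP g1; apply/eqP; move: f_pos f_le_g; lia.
Qed.

End Successor.

Theorem mainTheorem5 (T : finType) (e : rel T)
  (e_sym : symmetric e) (e_irr : irreflexive e)
  (G_conn : graph_connected e) (n_ge2 : 1 < #|T|)
  (t : nat) (t_lt_kappa : t < kappa e)
  (R : nat) (R_radius : is_radius e t R)
  (X : eqType) (x : T -> X)
  (phi : pattern T) (phi_valid : valid_pattern e t phi)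
  (H1 : #|[set v | crashes_at phi v 1]| <= 1)
  (H2 : forall v, crashes_at phi v 1 -> in_Phi_star e t v phi) :
  forall (u w : T) (phi' : pattern T), successor e phi u w phi' ->
    [/\ #|[set v | crashes_at phi' v 1]| <= 1,
        (forall v, crashes_at phi' v 1 -> crashes_at phi v 1) &
        exists w0, [/\ ~~ faulty phi w0, ~~ faulty phi' w0 &
                       view e x w0 R.-1 phi =1 view e x w0 R.-1 phi']].
Proof.
move=> u w phi' [[_ u_last] [F [f [phi_u [agree update]]]]].
have [_ pattern_ok] := phi_valid.
have [f_pos _ _] := pattern_ok _ _ _ phi_u.
have crash_le_f v F0 g : phi v = Some (F0, g) -> g <= f.
  by move=> phi_v; have := u_last v; rewrite /faulty /fround phi_v phi_u; apply.
have [w0 [w0_ok w0_ok' same_paths]] := successor_cpath_le_agree e_sym e_irr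
  phi_u crash_le_f agree update
  (reach_correct_within e_irr phi_valid t_lt_kappa crash_le_f H2) R.-1.
have crash1 := successor_crash1 phi_u f_pos agree update.
split => //.
- apply: leq_trans H1; apply/subset_leq_card/subsetP => v.
  by rewrite !inE; apply: crash1.
- by exists w0; split => // p; rewrite /view same_paths.
Qed.
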